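(* Let $\mathcal G$ be an étale groupoid and $X$ a right $\mathcal G$-space with basic action, and $p\colon X\to X/\mathcal G$ the orbit projection. Then $X\times_{p,X/\mathcal G,p}X=\{(x_1,x_2)\in X\times X:p(x_1)=p(x_2)\}$ is closed in $X\times X$ if and only if $X/\mathcal G$ is Hausdorff.
   Context: An étale groupoid: topologies on arrow space $\mathcal G$ and object space $\mathcal G^0\subseteq\mathcal G$ with $r,s$ local homeomorphisms, multiplication and inversion continuous. A right $\mathcal G$-space: space $X$, continuous anchor $s\colon X\to\mathcal G^0$, continuous action $X\times_{s,\mathcal G^0,r}\mathcal G\to X$ with $s(xg)=s(g)$, $(xg_1)g_2=x(g_1g_2)$, $x\,s(x)=x$. $X/\mathcal G$ carries the quotient topology. The action is basic if $(x,g)\mapsto(xg,x)$, $X\times_{s,\mathcal G^0,r}\mathcal G\to X\times X$, is a homeomorphism onto its image with the subspace topology. *)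

From HB Require Import structures.
From mathcomp Require Import all_boot all_order all_algebra.
From mathcomp Require Import all_classical all_reals all_analysis.
Set Implicit Arguments. Unset Strict Implicit. Unset Printing Implicit Defensive.
Local Open Scope classical_set_scope.

Definition open_in (T : topologicalType) (D A : set T) : Prop :=
  exists W : set T, open W /\ A = W `&` D.

(* f : S -> T (with values in D) is a local homeomorphism S -> D, D carrying
   the subspace topology: every point has an open neighbourhood V on which f
   is injective and continuous, and f maps open subsets of V to sets open in D
   (so f(V) is open in D and f|_V : V -> f(V) is a homeomorphism). *)
Definition local_homeo_onto (S T : topologicalType) (f : S -> T) (D : set T) :=
  (forall a, D (f a)) /\
  forall a, exists V : set S, [/\ open V, V a, {in V &, injective f},
     {within V, continuous f} &
     forall O, open O -> O `<=` V -> open_in D (f @` O)].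

(* Étale groupoid: arrow space G, unit space U = G^0 ⊆ G (subspace topology),
   range r, source s, multiplication mul (relevant on composable pairs
   s g = r h; g h means "first h then g" convention: gh defined iff s g = r h),
   inversion inv. *)
Definition etale_groupoid (G : topologicalType) (U : set G)
    (r s inv : G -> G) (mul : G -> G -> G) : Prop :=
  (forall g, U (r g) /\ U (s g)) /\
  (forall u, U u -> r u = u /\ s u = u) /\
  (forall g h, s g = r h -> r (mul g h) = r g /\ s (mul g h) = s h) /\
  (forall g h k, s g = r h -> s h = r k -> mul (mul g h) k = mul g (mul h k)) /\
  (forall g, mul (r g) g = g /\ mul g (s g) = g) /\
  (forall g, r (inv g) = s g /\ s (inv g) = r g /\
             mul g (inv g) = r g /\ mul (inv g) g = s g) /\
  local_homeo_onto r U /\ local_homeo_onto s U /\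
  {within [set p : G * G | s p.1 = r p.2], continuous (fun p => mul p.1 p.2)} /\
  continuous inv.

Definition right_action (G X : topologicalType) (U : set G)
    (r s : G -> G) (mul : G -> G -> G) (sX : X -> G) (act : X -> G -> X) : Prop :=
  (forall x, U (sX x)) /\ continuous sX /\
  {within [set p : X * G | sX p.1 = r p.2], continuous (fun p => act p.1 p.2)} /\
  (forall x g, sX x = r g -> sX (act x g) = s g) /\
  (forall x g1 g2, sX x = r g1 -> s g1 = r g2 ->
     act (act x g1) g2 = act x (mul g1 g2)) /\
  (forall x, act x (sX x) = x).

Definition basic_action (G X : topologicalType) (r : G -> G)
    (sX : X -> G) (act : X -> G -> X) : Prop :=
  let D := [set p : X * G | sX p.1 = r p.2] in
  let phi := fun p : X * G => (act p.1 p.2, p.1) in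
  [/\ {in D &, injective phi}, {within D, continuous phi} &
      forall O, open_in D O -> O `<=` D -> open_in (phi @` D) (phi @` O)].

Section OrbitSpace.
Variables (G X : topologicalType) (r : G -> G) (sX : X -> G) (act : X -> G -> X).

Definition orbit (x : X) : set X := [set y | exists g, sX x = r g /\ y = act x g].

Definition orbit_space := {A : set X | exists x, A = orbit x}.

Definition orbit_proj (x : X) : orbit_space :=
  exist (fun A => exists x, A = orbit x) (orbit x) (ex_intro _ x erefl).

HB.instance Definition _ := gen_eqMixin orbit_space.
HB.instance Definition _ := gen_choiceMixin orbit_space.

Definition orbit_open (A : set orbit_space) := open (orbit_proj @^-1` A).

Program Definition orbit_space_topology :=
  @isOpenTopological.Build orbit_space orbit_open _ _ _.
Next Obligation. by rewrite /orbit_open preimage_setT; exact: openT. Qed.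
Next Obligation. by move=> ? ? ? ?; exact: openI. Qed.
Next Obligation. by move=> I f ofi; apply: bigcup_open => i _; exact: ofi. Qed.
HB.instance Definition _ := orbit_space_topology.

End OrbitSpace.

From Pilot Require Import Defs.
From HB Require Import structures.
From mathcomp Require Import all_boot all_order all_algebra.
From mathcomp Require Import all_classical all_reals all_analysis.
Set Implicit Arguments.
Unset Strict Implicit.
Unset Printing Implicit Defensive.
Local Open Scope classical_set_scope.

(* The orbit projection p : X -> X/G is continuous and surjective, and it is
   open: if x lies in an open O and y = x g, then act y g^-1 = x, so by
   continuity of the action every y' near y and every h near g^-1 with
   sX y' = r h have act y' h in O; since r is a local homeomorphism onto G^0,
   every y' close enough to y admits such an h, hence lies in the saturation
   of O.  For an open continuous surjection p, the relation p x1 = p x2 is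
   closed iff the quotient is Hausdorff: a product neighbourhood avoiding the
   relation is pushed forward to disjoint open sets, and disjoint open sets
   downstairs pull back to a product neighbourhood avoiding the relation. *)

Section OpenSurjection.
Variables (T Y : topologicalType) (p : T -> Y).

Lemma closed_kernel_of_hausdorff : continuous p -> hausdorff_space Y ->
  closed [set q : T * T | p q.1 = p q.2].
Proof.
rewrite open_hausdorff => p_cont Y_T2; rewrite -openC openE => -[x y] /= /eqP pxy.
have [[A B] /=] := Y_T2 _ _ pxy; rewrite !inE => -[Apx Bpy] [oA oB AB0].
exists (p @^-1` A, p @^-1` B); first by split; apply: p_cont; apply: open_nbhs_nbhs.
move=> [x' y'] [/= Ax' By'] /= pxy'.
have : (A `&` B) (p x') by split => //; rewrite pxy'.
by rewrite AB0.
Qed.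

Lemma hausdorff_of_closed_kernel :
  (forall y, exists x, p x = y) -> (forall O, open O -> open (p @` O)) ->
  closed [set q : T * T | p q.1 = p q.2] -> hausdorff_space Y.
Proof.
move=> p_surj p_open /closed_openC; rewrite openE => offR.
rewrite open_hausdorff => a b.
have [[x <-] [y <-]] := (p_surj a, p_surj b); move=> /eqP pxy.
have [[P Q] [/= nP nQ] PQ] := offR (x, y) pxy.
move: nP nQ; rewrite !nbhsE => -[P0 [oP0 P0x] P0P] [Q0 [oQ0 Q0y] Q0Q].
exists (p @` P0, p @` Q0); first by rewrite !inE; split; [exists x | exists y].
split; [exact: p_open | exact: p_open |].
apply/eqP; rewrite -subset0 => _ [[x' P0x' <-] [y' Q0y' pxy']].
by apply: (PQ (x', y')); [split; [apply: P0P | apply: Q0Q] | rewrite /= pxy'].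
Qed.

Lemma closed_kernelP : continuous p ->
  (forall y, exists x, p x = y) -> (forall O, open O -> open (p @` O)) ->
  closed [set q : T * T | p q.1 = p q.2] <-> hausdorff_space Y.
Proof.
move=> p_cont p_surj p_open; split; first exact: hausdorff_of_closed_kernel.
exact: closed_kernel_of_hausdorff.
Qed.

End OpenSurjection.

Lemma local_homeo_image_nbhs (S T : topologicalType) (f : S -> T) (D : set T)
    a (B : set S) : local_homeo_onto f D -> nbhs a B ->
  exists2 W, open_nbhs (f a) W & W `&` D `<=` f @` B.
Proof.
move=> [fD /(_ a) [V [oV Va _ _ f_open]]]; rewrite nbhsE => -[B0 [oB0 B0a] B0B].
have [W [oW fBV]] := f_open (B0 `&` V) (openI oB0 oV) (@subIsetr _ _ _).
exists W.
  by split=> //; have [] : (W `&` D) (f a) by rewrite -fBV; exists a.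
by rewrite -fBV => _ [b [B0b _] <-]; exists b => //; apply: B0B.
Qed.

Section OrbitProjection.
Variables (G X : topologicalType) (U : set G) (r s inv : G -> G)
  (mul : G -> G -> G) (sX : X -> G) (act : X -> G -> X).
Local Notation orbit := (Defs.orbit r sX act).
Local Notation p := (orbit_proj r sX act).

Lemma orbit_projP x y : p x = p y <-> orbit x = orbit y.
Proof.
split=> [/(congr1 sval)//|]; rewrite /orbit_proj => E.
move: (ex_intro _ x _) (ex_intro _ y _); rewrite E => p1 p2.
by congr exist; exact: Prop_irrelevance.
Qed.

Lemma orbit_proj_surj (a : orbit_space r sX act) : exists x, p x = a.
Proof.
case: a => A [x A_orbit]; exists x; subst A.
by congr exist; exact: Prop_irrelevance.
Qed.

Lemma continuous_orbit_proj : continuous p.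
Proof. by apply/continuousP. Qed.

Hypothesis HG : etale_groupoid U r s inv mul.
Hypothesis HA : right_action U r s mul sX act.

Lemma orbit_refl x : orbit x x.
Proof.
have [_ [Uid _]] := HG; have [sXU [_ [_ [_ [_ actid]]]]] := HA.
by exists (sX x); rewrite actid (Uid _ (sXU x)).1.
Qed.

Lemma orbit_act x g : sX x = r g -> orbit (act x g) = orbit x.
Proof.
have [_ [_ [mulrs [assoc [unit [invax _]]]]]] := HG.
have [_ [_ [_ [sXact [actmul _]]]]] := HA.
move=> xg; apply/seteqP; split => z.
- move=> [k [gk ->]]; rewrite sXact // in gk.
  exists (mul g k); split; first by rewrite (mulrs _ _ gk).1.
  by rewrite actmul.
- move=> [k [xk ->]].
  have ginvk : s (inv g) = r k by rewrite (invax g).2.1 -xg.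
  have gk : s g = r (mul (inv g) k) by rewrite (mulrs _ _ ginvk).1 (invax g).1.
  exists (mul (inv g) k); split; first by rewrite sXact.
  rewrite actmul // -assoc //; last by rewrite (invax g).1.
  by rewrite (invax g).2.2.1 -xg xk (unit k).1.
Qed.

Lemma act_inv x g : sX x = r g ->
  sX (act x g) = r (inv g) /\ act (act x g) (inv g) = x.
Proof.
have [_ [_ [_ [_ [_ [invax _]]]]]] := HG.
have [_ [_ [_ [sXact [actmul actid]]]]] := HA.
move=> xg; split; first by rewrite sXact // (invax g).1.
by rewrite actmul ?(invax g).1 // (invax g).2.2.1 -xg actid.
Qed.

Lemma act_nbhs y h (O : set X) : sX y = r h -> nbhs (act y h) O ->
  exists2 A, nbhs y A & exists2 B, nbhs h B &
    forall y' h', A y' -> B h' -> sX y' = r h' -> O (act y' h').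
Proof.
have [_ [_ [act_cont _]]] := HA.
move=> yh yhO; move/subspace_continuousP: act_cont => /(_ (y, h) yh O yhO).
rewrite nbhs_simpl /within /= => -[[A B] /= [yA hB] AB].
exists A => //; exists B => // y' h' Ay' Bh' y'h'.
exact: (AB (y', h')).
Qed.

Lemma orbit_proj_open (O : set X) : open O -> open (p @` O).
Proof.
have [_ [_ [_ [_ [_ [_ [r_lh _]]]]]]] := HG; have [sXU [sX_cont _]] := HA.
move=> oO; change (open (p @^-1` (p @` O))); rewrite openE => y [x Ox /orbit_projP xy].
have [g [xg ->]] : orbit x y by rewrite xy; exact: orbit_refl.
have [xgD xgK] := act_inv xg.
have nO : nbhs (act (act x g) (inv g)) O by rewrite xgK; exact: open_nbhs_nbhs.
have [A nA [B nB AB]] := act_nbhs xgD nO.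
have [W [oW Wr] WB] := local_homeo_image_nbhs r_lh nB.
have nW : nbhs (act x g) (sX @^-1` W).
  by apply: sX_cont; apply: open_nbhs_nbhs; rewrite /open_nbhs /= xgD.
apply: filterS (filterI nA nW) => y' [Ay' Wy'].
have [h Bh rh] := WB _ (conj Wy' (sXU y')).
exists (act y' h); first exact: AB (esym rh).
by apply/orbit_projP; apply: orbit_act.
Qed.

End OrbitProjection.

Theorem lemma2p13 (G X : topologicalType) (U : set G) (r s inv : G -> G)
    (mul : G -> G -> G) (sX : X -> G) (act : X -> G -> X) :
  etale_groupoid U r s inv mul ->
  right_action U r s mul sX act ->
  basic_action r sX act ->
  closed [set q : X * X | orbit_proj r sX act q.1 = orbit_proj r sX act q.2]
  <-> hausdorff_space (orbit_space r sX act).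
Proof.
move=> HG HA _; apply: closed_kernelP.
- exact: continuous_orbit_proj.
- exact: orbit_proj_surj.
- exact: orbit_proj_open HG HA.
Qed.
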